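(* Let $\mathbf{X}\subseteq\mathbb{R}_+^n$ be a closed interval and $\mathrm{IC}(\mathbf{a}_0,\dots,\mathbf{a}_{n-1})$ an interval circulant matrix. Then $\mathrm{IC}(\mathbf{a}_0,\dots,\mathbf{a}_{n-1})$ is tolerance $\mathbf{X}$-robust, i.e. for every $A\in\mathrm{IC}(\mathbf{a}_0,\dots,\mathbf{a}_{n-1})$ there exists $x\in\mathbf{X}$ with $x\in\mathrm{Attr}(A)$, if and only if $\mathrm{Attr}(A^{(k)})\cap\mathbf{X}\ne\emptyset$ for every $k\in\{0,\dots,n-1\}$. Equivalently, if and only if for every $k$ with $A^{(k)}\neq0$ the system $\lambda(A^{(k)})(A^{(k)})^{n^2}\otimes y=(A^{(k)})^{n^2+1}\otimes y$ has a solution $y\in\mathbf{X}$.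
   Context: Max algebra on $\mathbb{R}_+$: $\oplus=\max$, ordinary product, $A^t$ max-algebraic power; $\lambda(A)$ greatest max-algebraic eigenvalue (maximum cycle geometric mean); $\mathrm{Attr}(A)=\{x\in\mathbb{R}_+^n: A^{t+1}\otimes x=\lambda(A)A^t\otimes x\text{ for some }t\ge0\}$. A closed interval is $\mathbf{X}=\prod_i[\underline{x}_i,\overline{x}_i]\subseteq\mathbb{R}_+^n$. $\mathrm{Circ}(a_0,\dots,a_{n-1})$ has entries $A_{i,j}=a_t$, $t\equiv j-i\pmod n$; $\mathrm{IC}(\mathbf{a}_0,\dots,\mathbf{a}_{n-1})$ is the set of all $\mathrm{Circ}(a_0,\dots,a_{n-1})$ with $a_t\in\mathbf{a}_t$, each $\mathbf{a}_t\subseteq\mathbb{R}_+$ a nonempty interval of one of the forms $[\underline{a}_t,\overline{a}_t]$, $(\underline{a}_t,\overline{a}_t)$, $(\underline{a}_t,\overline{a}_t]$, $[\underline{a}_t,\overline{a}_t)$. $A^{(k)}=\mathrm{Circ}(\underline{a}_0,\dots,\underline{a}_{k-1},\overline{a}_k,\underline{a}_{k+1},\dots,\underline{a}_{n-1})$. *)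

From Stdlib Require Import Reals List Arith.
Import ListNotations.
Open Scope R_scope.

(* n x n matrices / n-vectors over R_+ are represented as functions on nat;
   only indices < n are meaningful. *)
Definition mat := nat -> nat -> R.
Definition vec := nat -> R.

(* max-algebraic sum over indices 0..m-1 (0 is neutral on R_+) *)
Fixpoint mmax (m : nat) (f : nat -> R) : R :=
  match m with O => 0 | S k => Rmax (mmax k f) (f k) end.

Definition mmul (n : nat) (A B : mat) : mat :=
  fun i j => mmax n (fun k => A i k * B k j).

Definition mid : mat := fun i j => if Nat.eqb i j then 1 else 0.

Fixpoint mpow (n : nat) (A : mat) (t : nat) : mat :=
  match t with O => mid | S s => mmul n A (mpow n A s) end.

Definition mvec (n : nat) (A : mat) (x : vec) : vec :=
  fun i => mmax n (fun j => A i j * x j).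

Fixpoint seqs (n k : nat) : list (list nat) :=
  match k with
  | O => [[]]
  | S k' => flat_map (fun s => map (fun i => i :: s) (seq 0 n)) (seqs n k')
  end.

(* weight of the cycle i0 -> i1 -> ... -> i_{k-1} -> i0 *)
Fixpoint cw_aux (A : mat) (first : nat) (l : list nat) : R :=
  match l with
  | [] => 1
  | [x] => A x first
  | x :: ((y :: _) as t) => A x y * cw_aux A first t
  end.

Definition cycle_weight (A : mat) (l : list nat) : R :=
  match l with [] => 1 | x :: _ => cw_aux A x l end.

Definition gmean (w : R) (k : nat) : R :=
  if Rle_dec w 0 then 0 else Rpower w (/ INR k).

(* lambda(A): maximum cycle geometric mean (cycles of length 1..n suffice) *)
Definition lam (n : nat) (A : mat) : R :=
  fold_right Rmax 0
    (map (fun l => gmean (cycle_weight A l) (length l))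
         (flat_map (fun k => seqs n k) (seq 1 n))).

Definition Attr (n : nat) (A : mat) (x : vec) : Prop :=
  exists t : nat, forall i, (i < n)%nat ->
    mvec n (mpow n A (S t)) x i = lam n A * mvec n (mpow n A t) x i.

Definition inX (n : nat) (xl xu : vec) (x : vec) : Prop :=
  forall i, (i < n)%nat -> xl i <= x i <= xu i.

Definition circ (n : nat) (a : nat -> R) : mat :=
  fun i j => a ((j + n - i) mod n)%nat.

(* interval a_t with endpoints al t <= au t; lc t / uc t say whether the
   lower / upper endpoint is included *)
Definition inI (al au : nat -> R) (lc uc : nat -> bool) (t : nat) (a : R) : Prop :=
  (if lc t then al t <= a else al t < a) /\ (if uc t then a <= au t else a < au t).

Definition Ak (n : nat) (al au : nat -> R) (k : nat) : mat :=
  circ n (fun t => if Nat.eqb t k then au t else al t).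

Definition mnonzero (n : nat) (A : mat) : Prop :=
  exists i j, (i < n)%nat /\ (j < n)%nat /\ A i j <> 0.

Definition tol_robust (n : nat) (al au : nat -> R) (lc uc : nat -> bool)
  (xl xu : vec) : Prop :=
  forall a : nat -> R, (forall t, (t < n)%nat -> inI al au lc uc t (a t)) ->
    exists x, inX n xl xu x /\ Attr n (circ n a) x.

(* Let A = Circ(a) with a >= 0 and let a_k be a largest coefficient. Then lambda(A) = a_k,
   and for t >= n - 1 one has (A^(t+1) x)_i = a_k (A^t x)_(i+k): an optimal path of length n
   contains a segment whose shifts sum to a multiple of k modulo n, and replacing it by
   k-steps loses nothing. Hence x is in Attr(A) iff A^(n-1) x is invariant under rotation by
   k, iff a_k^(n-1) x_(i+jk) <= (A^(n-1) x)_i for all i, j. This condition only gets weaker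
   as the normalised coefficients a / a_k grow; for a member of the interval family whose
   maximum sits at k they dominate those of A^(k), which gives sufficiency. Conversely A^(k)
   is a limit of members of the family. The vectors of X that are approximately attracted
   form sets closed under limits and under max, so each has a greatest element; these
   decrease to a vector that A^(k) attracts exactly. *)

From Stdlib Require Import Reals List Arith Lia Lra Classical_Prop IndefiniteDescription.
Import ListNotations.
Open Scope R_scope.

(** * Max-algebraic sums and products *)

Lemma mmax_ge0 m f : 0 <= mmax m f.
Proof. induction m; simpl; [lra|]. eapply Rle_trans; [exact IHm|apply Rmax_l]. Qed.

Lemma mmax_ge m f k : (k < m)%nat -> f k <= mmax m f.
Proof.
  induction m; intros Hk; [lia|]. simpl.
  destruct (Nat.eq_dec k m) as [->|Hne]; [apply Rmax_r|].
  eapply Rle_trans; [apply IHm; lia|apply Rmax_l].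
Qed.

Lemma mmax_lub m f M : 0 <= M -> (forall k, (k < m)%nat -> f k <= M) -> mmax m f <= M.
Proof.
  induction m; intros HM Hf; simpl; [exact HM|].
  apply Rmax_lub; [apply IHm; auto|apply Hf; lia].
Qed.

Lemma mmax_attained m f : (0 < m)%nat -> (forall k, (k < m)%nat -> 0 <= f k) ->
  exists k, (k < m)%nat /\ mmax m f = f k.
Proof.
  induction m as [|m IH]; intros Hm Hf; [lia|]. simpl.
  destruct (Nat.eq_dec m 0) as [->|Hm0].
  { exists 0%nat. split; [lia|]. apply Rmax_right. apply Hf; lia. }
  destruct IH as [k [Hk E]]; [lia|intros; apply Hf; lia|].
  destruct (Rle_dec (mmax m f) (f m)).
  - exists m. split; [lia|]. now apply Rmax_right.
  - exists k. split; [lia|]. rewrite Rmax_left; [exact E|lra].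
Qed.

Lemma mmax_le_compat m f g : (forall k, (k < m)%nat -> f k <= g k) -> mmax m f <= mmax m g.
Proof.
  intros H. apply mmax_lub; [apply mmax_ge0|]. intros k Hk.
  eapply Rle_trans; [apply H, Hk|apply mmax_ge, Hk].
Qed.

Lemma mmax_ext m f g : (forall k, (k < m)%nat -> f k = g k) -> mmax m f = mmax m g.
Proof. intros H; apply Rle_antisym; apply mmax_le_compat; intros k Hk; rewrite (H k Hk); lra. Qed.

Lemma mmax_scal m f c : 0 <= c -> mmax m (fun k => c * f k) = c * mmax m f.
Proof. intros Hc. induction m; simpl; [ring|]. rewrite IHm. now apply RmaxRmult. Qed.

Lemma mmax_Rmax m f g :
  mmax m (fun k => Rmax (f k) (g k)) = Rmax (mmax m f) (mmax m g).
Proof.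
  induction m; simpl; [now rewrite Rmax_left by lra|]. rewrite IHm.
  unfold Rmax; repeat destruct Rle_dec; lra.
Qed.

Lemma mmax_swap m p (f : nat -> nat -> R) :
  mmax m (fun j => mmax p (fun k => f j k)) = mmax p (fun k => mmax m (fun j => f j k)).
Proof.
  apply Rle_antisym.
  - apply mmax_lub; [apply mmax_ge0|]. intros j Hj. apply mmax_lub; [apply mmax_ge0|].
    intros k Hk. eapply Rle_trans; [|apply mmax_ge, Hk]. apply (mmax_ge m (fun j => f j k)), Hj.
  - apply mmax_lub; [apply mmax_ge0|]. intros k Hk. apply mmax_lub; [apply mmax_ge0|].
    intros j Hj. eapply Rle_trans; [|apply mmax_ge, Hj]. apply (mmax_ge p (fun k => f j k)), Hk.
Qed.

Lemma mvec_mmul n (A B : mat) x i :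
  (forall k, (k < n)%nat -> 0 <= A i k) -> (forall j, (j < n)%nat -> 0 <= x j) ->
  mvec n (mmul n A B) x i = mvec n A (mvec n B x) i.
Proof.
  intros HA Hx. unfold mvec, mmul.
  transitivity (mmax n (fun j => mmax n (fun k => A i k * B k j * x j))).
  { apply mmax_ext; intros j Hj. rewrite Rmult_comm, <- mmax_scal by auto.
    apply mmax_ext; intros; ring. }
  rewrite mmax_swap. apply mmax_ext; intros k Hk.
  rewrite <- mmax_scal by auto. apply mmax_ext; intros; ring.
Qed.

Lemma mvec_mid n x i : (i < n)%nat -> 0 <= x i -> mvec n mid x i = x i.
Proof.
  intros Hi Hx. unfold mvec, mid. apply Rle_antisym.
  - apply mmax_lub; [exact Hx|]. intros j Hj. destruct (Nat.eqb_spec i j); subst; lra.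
  - eapply Rle_trans; [|apply (mmax_ge n (fun j => (if Nat.eqb i j then 1 else 0) * x j)), Hi].
    rewrite Nat.eqb_refl; lra.
Qed.

Lemma mod_eq_iff n x y : x mod n = y mod n <-> exists c d, (x + c * n = y + d * n)%nat.
Proof.
  split.
  - intros E. exists (y / n)%nat, (x / n)%nat.
    pose proof (Nat.div_mod_eq x n). pose proof (Nat.div_mod_eq y n). lia.
  - intros [c [d E]]. rewrite <- (Nat.Div0.mod_add x c n), E. apply Nat.Div0.mod_add.
Qed.

(** * The circulant operator *)

Section Circulant.

Variable n : nat.
Hypothesis n_pos : (0 < n)%nat.

Definition nneg (a : nat -> R) := forall t, (t < n)%nat -> 0 <= a t.

Definition circ_mv (a : nat -> R) (y : vec) : vec := mvec n (circ n a) y.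

Fixpoint circ_iter (a : nat -> R) (t : nat) (y : vec) : vec :=
  match t with O => y | S t => circ_mv a (circ_iter a t y) end.

Lemma mod_lt x : (x mod n < n)%nat.
Proof. apply Nat.mod_upper_bound; lia. Qed.

Lemma circ_nonneg a i j : nneg a -> 0 <= circ n a i j.
Proof. intros Ha. unfold circ. apply Ha, mod_lt. Qed.

Lemma circ_le_mmax a i j : circ n a i j <= mmax n a.
Proof. unfold circ. apply mmax_ge, mod_lt. Qed.

Lemma circ_shift a i s : (i < n)%nat -> (s < n)%nat -> circ n a i ((i + s) mod n)%nat = a s.
Proof.
  intros Hi Hs. unfold circ. f_equal. rewrite <- (Nat.mod_small s n) at 2 by exact Hs.
  apply mod_eq_iff. exists ((i + s) / n)%nat, 1%nat.
  pose proof (Nat.div_mod_eq (i + s) n). pose proof (mod_lt (i + s)). nia.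
Qed.

Lemma circ_mv_shift_form a y i : (i < n)%nat ->
  circ_mv a y i = mmax n (fun s => a s * y ((i + s) mod n)%nat).
Proof.
  intros Hi. unfold circ_mv, mvec. apply Rle_antisym.
  - apply mmax_lub; [apply mmax_ge0|]. intros j Hj.
    set (s := ((j + n - i) mod n)%nat).
    assert (Hj' : ((i + s) mod n)%nat = j).
    { rewrite <- (Nat.mod_small j n) by exact Hj. apply mod_eq_iff.
      exists ((j + n - i) / n)%nat, 1%nat. pose proof (Nat.div_mod_eq (j + n - i) n). unfold s. nia. }
    unfold circ. fold s. rewrite <- Hj'.
    apply (mmax_ge n (fun s => a s * y ((i + s) mod n)%nat)), mod_lt.
  - apply mmax_lub; [apply mmax_ge0|]. intros s Hs. rewrite <- (circ_shift a i s) by auto.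
    apply (mmax_ge n (fun j => circ n a i j * y j)), mod_lt.
Qed.

Lemma circ_mv_ge0 a y i : 0 <= circ_mv a y i.
Proof. apply mmax_ge0. Qed.

Lemma circ_mv_ge a y i s : nneg a -> nneg y -> (i < n)%nat -> (s < n)%nat ->
  a s * y ((i + s) mod n)%nat <= circ_mv a y i.
Proof.
  intros Ha Hy Hi Hs. rewrite circ_mv_shift_form by exact Hi.
  apply (mmax_ge n (fun s => a s * y ((i + s) mod n)%nat)), Hs.
Qed.

Lemma circ_mv_ext a y z i : (forall j, (j < n)%nat -> y j = z j) -> circ_mv a y i = circ_mv a z i.
Proof. intros H. apply mmax_ext. intros j Hj. now rewrite (H j Hj). Qed.

Lemma circ_mv_le_compat a y z i : nneg a -> (forall j, (j < n)%nat -> y j <= z j) ->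
  circ_mv a y i <= circ_mv a z i.
Proof.
  intros Ha H. apply mmax_le_compat. intros j Hj.
  apply Rmult_le_compat_l; [apply circ_nonneg, Ha|apply H, Hj].
Qed.

Lemma circ_mv_scal a y c i : 0 <= c -> circ_mv a (fun j => c * y j) i = c * circ_mv a y i.
Proof.
  intros Hc. unfold circ_mv, mvec. rewrite <- mmax_scal by exact Hc. apply mmax_ext. intros; ring.
Qed.

Lemma circ_mv_coef_scal a y c i : 0 <= c -> circ_mv (fun t => c * a t) y i = c * circ_mv a y i.
Proof.
  intros Hc. unfold circ_mv, mvec, circ. rewrite <- mmax_scal by exact Hc. apply mmax_ext. intros; ring.
Qed.

Lemma circ_mv_coef_le_compat a b y i : (forall t, (t < n)%nat -> a t <= b t) -> nneg y ->
  circ_mv a y i <= circ_mv b y i.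
Proof.
  intros Hab Hy. apply mmax_le_compat. intros j Hj.
  apply Rmult_le_compat_r; [apply Hy, Hj|apply Hab, mod_lt].
Qed.

Lemma circ_mv_Rmax a y z i : nneg a ->
  circ_mv a (fun j => Rmax (y j) (z j)) i = Rmax (circ_mv a y i) (circ_mv a z i).
Proof.
  intros Ha. unfold circ_mv, mvec. rewrite <- mmax_Rmax. apply mmax_ext. intros j Hj.
  symmetry. apply RmaxRmult, circ_nonneg, Ha.
Qed.

Lemma circ_mv_rotate a y c i : (i < n)%nat ->
  circ_mv a (fun j => y ((j + c) mod n)%nat) i = circ_mv a y ((i + c) mod n)%nat.
Proof.
  intros Hi. rewrite !circ_mv_shift_form by (exact Hi || apply mod_lt). apply mmax_ext. intros s Hs.
  rewrite !Nat.Div0.add_mod_idemp_l. do 3 f_equal. lia.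
Qed.

Lemma circ_iter_add a p q y : circ_iter a (p + q) y = circ_iter a p (circ_iter a q y).
Proof. induction p; simpl; congruence. Qed.

Lemma circ_iter_ext a t y z i : (forall j, (j < n)%nat -> y j = z j) -> (i < n)%nat ->
  circ_iter a t y i = circ_iter a t z i.
Proof. intros H. revert i. induction t; simpl; intros i Hi; [auto|]. apply circ_mv_ext. auto. Qed.

Lemma circ_iter_ge0 a t y : nneg y -> nneg (circ_iter a t y).
Proof. intros Hy i Hi. destruct t; simpl; [auto|apply circ_mv_ge0]. Qed.

Lemma circ_iter_le_compat a t y z i : nneg a -> (forall j, (j < n)%nat -> y j <= z j) ->
  (i < n)%nat -> circ_iter a t y i <= circ_iter a t z i.
Proof. intros Ha H. revert i. induction t; simpl; intros i Hi; [auto|]. now apply circ_mv_le_compat. Qed.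

Lemma circ_iter_scal a t y c i : 0 <= c -> (i < n)%nat ->
  circ_iter a t (fun j => c * y j) i = c * circ_iter a t y i.
Proof.
  intros Hc. revert i. induction t; simpl; intros i Hi; [auto|].
  rewrite <- circ_mv_scal by exact Hc. now apply circ_mv_ext.
Qed.

Lemma circ_iter_coef_scal a t y c i : 0 <= c -> (i < n)%nat ->
  circ_iter (fun s => c * a s) t y i = c ^ t * circ_iter a t y i.
Proof.
  intros Hc. revert i. induction t; simpl; intros i Hi; [ring|].
  rewrite (circ_mv_ext _ _ (fun j => c ^ t * circ_iter a t y j)) by auto.
  rewrite circ_mv_coef_scal, circ_mv_scal by (auto using pow_le). ring.
Qed.

Lemma circ_iter_coef_le_compat a b t y i : nneg a -> (forall s, (s < n)%nat -> a s <= b s) ->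
  nneg y -> (i < n)%nat -> circ_iter a t y i <= circ_iter b t y i.
Proof.
  intros Ha Hab Hy. revert i. induction t; simpl; intros i Hi; [lra|].
  apply Rle_trans with (circ_mv a (circ_iter b t y) i).
  - now apply circ_mv_le_compat.
  - apply circ_mv_coef_le_compat, circ_iter_ge0; auto.
Qed.

Lemma circ_iter_Rmax a t y z i : nneg a -> (i < n)%nat ->
  circ_iter a t (fun j => Rmax (y j) (z j)) i = Rmax (circ_iter a t y i) (circ_iter a t z i).
Proof.
  intros Ha. revert i. induction t; simpl; intros i Hi; [auto|].
  rewrite <- circ_mv_Rmax by exact Ha. now apply circ_mv_ext.
Qed.

Lemma circ_iter_rotate a t y c i : (i < n)%nat ->
  circ_iter a t (fun j => y ((j + c) mod n)%nat) i = circ_iter a t y ((i + c) mod n)%nat.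
Proof.
  revert i. induction t; simpl; intros i Hi; [auto|].
  rewrite <- circ_mv_rotate by exact Hi. now apply circ_mv_ext.
Qed.

Lemma mvec_mpow_circ a t x i : nneg a -> nneg x -> (i < n)%nat ->
  mvec n (mpow n (circ n a) t) x i = circ_iter a t x i.
Proof.
  intros Ha Hx. revert i. induction t; simpl; intros i Hi.
  - now apply mvec_mid, Hx.
  - rewrite mvec_mmul by (auto; intros; apply circ_nonneg, Ha).
    change (circ_mv a (mvec n (mpow n (circ n a) t) x) i = circ_mv a (circ_iter a t x) i).
    apply circ_mv_ext. intros j Hj. now apply IHt.
Qed.

End Circulant.

(** * Optimal paths *)

Lemma pigeonhole (f : nat -> nat) N : (forall r, (r <= N)%nat -> (f r < N)%nat) ->
  exists p q, (p < q <= N)%nat /\ f p = f q.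
Proof.
  revert f. induction N as [|N IH]; intros f Hf.
  { specialize (Hf 0%nat (le_n 0)). lia. }
  destruct (classic (exists r, (r <= N)%nat /\ f r = f (S N))) as [[r [Hr E]]|Hnew].
  { exists r, (S N). split; [lia|exact E]. }
  (* Otherwise remove the value [f (S N)] and compress the range of [f] on [0..N]. *)
  set (v := f (S N)).
  assert (Hv : forall r, (r <= N)%nat -> f r <> v) by (intros r Hr E; apply Hnew; eauto).
  destruct (IH (fun r => if Nat.ltb v (f r) then (f r - 1)%nat else f r)) as [p [q [Hpq E]]].
  - intros r Hr. specialize (Hv r Hr). assert (f r < S N)%nat by (apply Hf; lia).
    assert (v < S N)%nat by (apply Hf; lia). destruct (Nat.ltb_spec v (f r)); lia.
  - exists p, q. split; [lia|].
    pose proof (Hv p ltac:(lia)). pose proof (Hv q ltac:(lia)).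
    destruct (Nat.ltb_spec v (f p)), (Nat.ltb_spec v (f q)); lia.
Qed.

Section Paths.

Variable n : nat.
Hypothesis n_pos : (0 < n)%nat.

Fixpoint pweight (a : nat -> R) (l : list nat) : R :=
  match l with [] => 1 | s :: l => a s * pweight a l end.

Definition shifts (l : list nat) := Forall (fun s => (s < n)%nat) l.

Lemma pweight_app a l1 l2 : pweight a (l1 ++ l2) = pweight a l1 * pweight a l2.
Proof. induction l1; simpl; [ring|]. rewrite IHl1; ring. Qed.

Lemma pweight_ge0 a l : nneg n a -> shifts l -> 0 <= pweight a l.
Proof. intros Ha Hl. induction Hl; simpl; [lra|]. apply Rmult_le_pos; [now apply Ha|exact IHHl]. Qed.

Lemma pweight_le_pow a l M : nneg n a -> shifts l -> (forall s, (s < n)%nat -> a s <= M) ->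
  pweight a l <= M ^ length l.
Proof.
  intros Ha Hl HM. induction Hl; simpl; [lra|].
  apply Rmult_le_compat; auto. now apply pweight_ge0.
Qed.

Lemma pweight_repeat a k r : pweight a (repeat k r) = a k ^ r.
Proof. induction r; simpl; congruence. Qed.

Lemma list_sum_repeat k r : list_sum (repeat k r) = (r * k)%nat.
Proof. induction r; simpl; [reflexivity|]. change (k + list_sum (repeat k r) = k + r * k)%nat. lia. Qed.

Lemma circ_iter_ge_path a y l i : nneg n a -> nneg n y -> (i < n)%nat -> shifts l ->
  pweight a l * y ((i + list_sum l) mod n)%nat <= circ_iter n a (length l) y i.
Proof.
  intros Ha Hy Hi Hl. revert i Hi. induction Hl as [|s l Hs Hl IH]; simpl; intros i Hi.
  { rewrite Nat.add_0_r, Nat.mod_small by exact Hi. lra. }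
  apply Rle_trans with (a s * circ_iter n a (length l) y ((i + s) mod n)%nat).
  - rewrite Rmult_assoc. apply Rmult_le_compat_l; [now apply Ha|].
    replace ((i + (s + list_sum l)) mod n)%nat with (((i + s) mod n + list_sum l) mod n)%nat
      by (rewrite Nat.Div0.add_mod_idemp_l; f_equal; lia).
    apply IH, mod_lt, n_pos.
  - apply circ_mv_ge; auto using circ_iter_ge0.
Qed.

Lemma circ_iter_path_attained a y t i : nneg n a -> nneg n y -> (i < n)%nat ->
  exists l, length l = t /\ shifts l /\
    circ_iter n a t y i = pweight a l * y ((i + list_sum l) mod n)%nat.
Proof.
  intros Ha Hy. revert i. induction t; intros i Hi.
  { exists []. repeat split; [constructor|]. simpl.
    rewrite Nat.add_0_r, Nat.mod_small by exact Hi. ring. }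
  simpl. rewrite circ_mv_shift_form by auto.
  destruct (mmax_attained n (fun s => a s * circ_iter n a t y ((i + s) mod n)%nat)) as [s [Hs E]]; auto.
  { intros s Hs. apply Rmult_le_pos; [now apply Ha|apply circ_iter_ge0, mod_lt; auto]. }
  destruct (IHt ((i + s) mod n)%nat) as [l [Hlen [Hl E']]]; [apply mod_lt, n_pos|].
  exists (s :: l). repeat split; simpl; [congruence|now constructor|].
  rewrite E, E', Rmult_assoc. do 3 f_equal.
  rewrite Nat.Div0.add_mod_idemp_l. f_equal. lia.
Qed.

(* Among the n+1 prefixes of l, two have the same value of [sum + length * (n - k)] mod n;
   the segment between them sums to [length * k] modulo n. *)
Lemma segment_sum_congruent k l : (k < n)%nat -> length l = n ->
  exists l1 l2 l3, l = l1 ++ l2 ++ l3 /\ l2 <> [] /\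
    (list_sum l2) mod n = (length l2 * k) mod n.
Proof.
  intros Hk Hlen.
  destruct (pigeonhole (fun r => (list_sum (firstn r l) + r * (n - k)) mod n) n)
    as [p [q [Hpq E]]]; [intros; apply mod_lt, n_pos|].
  set (l2 := firstn (q - p) (skipn p l)).
  assert (Hq : firstn q l = firstn p l ++ l2).
  { unfold l2. rewrite firstn_skipn_comm. replace (p + (q - p))%nat with q by lia.
    rewrite <- (firstn_skipn p (firstn q l)) at 1. rewrite firstn_firstn.
    now replace (Nat.min p q) with p by lia. }
  assert (Hl2 : length l2 = (q - p)%nat)
    by (unfold l2; rewrite length_firstn, length_skipn; lia).
  exists (firstn p l), l2, (skipn q l). repeat split.
  - rewrite app_assoc, <- Hq. symmetry. apply firstn_skipn.
  - intros H. rewrite H in Hl2. simpl in Hl2. lia.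
  - rewrite Hq, list_sum_app in E. apply mod_eq_iff in E as [c [d E]].
    apply mod_eq_iff. exists (d + (q - p))%nat, c. rewrite Hl2. nia.
Qed.

Section Shortcut.

Variables (a : nat -> R) (k : nat).
Hypothesis a_nonneg : nneg n a.
Hypothesis k_lt : (k < n)%nat.
Hypothesis a_k_max : forall s, (s < n)%nat -> a s <= a k.

(* The congruent segment is replaced by repeated k-steps, one of them pulled out in front. *)
Lemma path_shortcut l : length l = n -> shifts l ->
  exists L, length L = (n - 1)%nat /\ shifts L /\
    pweight a l <= a k * pweight a L /\ (list_sum l) mod n = (k + list_sum L) mod n.
Proof.
  intros Hlen Hl.
  destruct (segment_sum_congruent k l k_lt Hlen) as [l1 [l2 [l3 [-> [Hne E]]]]].
  unfold shifts in Hl. rewrite !Forall_app in Hl. destruct Hl as [Hl1 [Hl2 Hl3]].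
  assert (Hl2pos : (0 < length l2)%nat) by (destruct l2; [congruence|simpl; lia]).
  exists (l1 ++ l3 ++ repeat k (length l2 - 1)). rewrite !length_app in Hlen. repeat split.
  - rewrite !length_app, repeat_length. lia.
  - unfold shifts. rewrite !Forall_app. repeat split; auto.
    now apply Forall_forall; intros s ->%repeat_spec.
  - rewrite !pweight_app, pweight_repeat.
    assert (Hw2 : pweight a l2 <= a k ^ length l2) by now apply pweight_le_pow.
    assert (0 <= pweight a l1) by now apply pweight_ge0.
    assert (0 <= pweight a l3) by now apply pweight_ge0.
    replace (a k * (pweight a l1 * (pweight a l3 * a k ^ (length l2 - 1))))
      with (pweight a l1 * (a k ^ length l2 * pweight a l3))
      by (replace (length l2) with (S (length l2 - 1)) at 1 by lia; simpl; ring).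
    apply Rmult_le_compat_l; [lra|]. now apply Rmult_le_compat_r.
  - rewrite !list_sum_app, list_sum_repeat. apply mod_eq_iff in E as [c [d E]].
    apply mod_eq_iff. exists c, d. simpl in E |- *. nia.
Qed.

Lemma circ_iter_n_le y i : nneg n y -> (i < n)%nat ->
  circ_iter n a n y i <= a k * circ_iter n a (n - 1) y ((i + k) mod n)%nat.
Proof.
  intros Hy Hi.
  destruct (circ_iter_path_attained a y n i) as [l [Hlen [Hl ->]]]; auto.
  destruct (path_shortcut l Hlen Hl) as [L [HlenL [HL [Hw E]]]].
  assert (Hidx : ((i + list_sum l) mod n = ((i + k) mod n + list_sum L) mod n)%nat).
  { rewrite Nat.Div0.add_mod_idemp_l, <- Nat.add_assoc, <- Nat.Div0.add_mod_idemp_r, E.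
    now rewrite Nat.Div0.add_mod_idemp_r. }
  rewrite Hidx, <- HlenL.
  eapply Rle_trans; [|apply Rmult_le_compat_l; [now apply a_nonneg|apply circ_iter_ge_path; auto]].
  - rewrite <- Rmult_assoc. apply Rmult_le_compat_r; [apply Hy, mod_lt, n_pos|exact Hw].
  - apply mod_lt, n_pos.
Qed.

End Shortcut.

End Paths.

(** * Eventual periodicity of circulant orbits *)

Section Stability.

Variable n : nat.
Hypothesis n_pos : (0 < n)%nat.

Definition stable_at (a : nat -> R) (t : nat) (x : vec) :=
  forall i, (i < n)%nat -> circ_iter n a (S t) x i = mmax n a * circ_iter n a t x i.

Definition rot_invariant (k : nat) (y : vec) :=
  forall i, (i < n)%nat -> y ((i + k) mod n)%nat = y i.

Lemma stable_at_succ a t x : stable_at a t x -> stable_at a (S t) x.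
Proof.
  intros H i Hi.
  change (circ_mv n a (circ_iter n a (S t) x) i = mmax n a * circ_mv n a (circ_iter n a t x) i).
  rewrite <- circ_mv_scal by apply mmax_ge0. now apply circ_mv_ext.
Qed.

Lemma stable_at_le a t s x : stable_at a t x -> (t <= s)%nat -> stable_at a s x.
Proof. intros H Hts. induction Hts; auto using stable_at_succ. Qed.

Lemma stable_at_zero a t x : nneg n a -> mmax n a = 0 -> stable_at a t x.
Proof.
  intros Ha Z i Hi. rewrite Z, Rmult_0_l. apply Rle_antisym; [|apply circ_mv_ge0].
  apply mmax_lub; [lra|]. intros j Hj. rewrite <- Z.
  pose proof (circ_le_mmax n n_pos a i j). pose proof (circ_nonneg n n_pos a i j Ha).
  replace (circ n a i j) with 0 by lra. lra.
Qed.

Lemma idx_add i c d k : (((i + c * k) mod n + d * k) mod n = (i + (c + d) * k) mod n)%nat.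
Proof. rewrite Nat.Div0.add_mod_idemp_l. f_equal. nia. Qed.

Lemma idx_period i c j k : ((i + (c * n + j) * k) mod n = (i + j * k) mod n)%nat.
Proof.
  replace (i + (c * n + j) * k)%nat with (i + j * k + (c * k) * n)%nat by nia.
  apply Nat.Div0.mod_add.
Qed.

Lemma idx_zero i k : (i < n)%nat -> ((i + 0 * k) mod n = i)%nat.
Proof. intros Hi. rewrite Nat.add_0_r. now apply Nat.mod_small. Qed.

Lemma rot_invariant_iter k y c i : rot_invariant k y -> (i < n)%nat ->
  y ((i + c * k) mod n)%nat = y i.
Proof.
  intros Hy Hi. induction c; [now rewrite idx_zero|].
  replace (S c) with (c + 1)%nat by lia.
  rewrite <- idx_add, Nat.mul_1_l, Hy by apply mod_lt, n_pos. exact IHc.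
Qed.

Lemma rot_invariant_circ_iter a t k y : rot_invariant k y -> rot_invariant k (circ_iter n a t y).
Proof.
  intros Hy i Hi. rewrite <- circ_iter_rotate by auto.
  apply circ_iter_ext; [|exact Hi]. intros j Hj. now apply Hy.
Qed.

Section MaxAt.

Variables (a : nat -> R) (k : nat).
Hypothesis a_nonneg : nneg n a.
Hypothesis k_lt : (k < n)%nat.
Hypothesis a_k_max : forall s, (s < n)%nat -> a s <= a k.

Definition attr_cond (x : vec) := forall i j, (i < n)%nat ->
  a k ^ (n - 1) * x ((i + j * k) mod n)%nat <= circ_iter n a (n - 1) x i.

Lemma mmax_at_max : mmax n a = a k.
Proof. apply Rle_antisym; [apply mmax_lub|apply mmax_ge]; auto. Qed.

Lemma circ_iter_ge_pow y t i : nneg n y -> (i < n)%nat ->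
  a k ^ t * y ((i + t * k) mod n)%nat <= circ_iter n a t y i.
Proof.
  intros Hy. revert i. induction t; intros i Hi.
  { rewrite idx_zero by exact Hi. simpl. lra. }
  apply Rle_trans with (a k * circ_iter n a t y ((i + 1 * k) mod n)%nat).
  - change (a k ^ S t) with (a k * a k ^ t). rewrite Rmult_assoc.
    apply Rmult_le_compat_l; [now apply a_nonneg|].
    eapply Rle_trans; [|apply IHt, mod_lt, n_pos]. rewrite idx_add. apply Rle_refl.
  - rewrite Nat.mul_1_l. apply circ_mv_ge; auto using circ_iter_ge0.
Qed.

Lemma circ_iter_succ_tail y t i : nneg n y -> (n - 1 <= t)%nat -> (i < n)%nat ->
  circ_iter n a (S t) y i = a k * circ_iter n a t y ((i + k) mod n)%nat.
Proof.
  intros Hy Ht Hi. apply Rle_antisym.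
  - replace (S t) with (n + (t - (n - 1)))%nat by lia. rewrite circ_iter_add.
    replace t with ((n - 1) + (t - (n - 1)))%nat at 2 by lia. rewrite circ_iter_add.
    apply circ_iter_n_le; auto using circ_iter_ge0.
  - apply circ_mv_ge; auto using circ_iter_ge0.
Qed.

Lemma circ_iter_tail_iter y t r i : nneg n y -> (n - 1 <= t)%nat -> (i < n)%nat ->
  circ_iter n a (r + t) y i = a k ^ r * circ_iter n a t y ((i + r * k) mod n)%nat.
Proof.
  intros Hy Ht. revert i. induction r; intros i Hi.
  { rewrite idx_zero by exact Hi. simpl. ring. }
  change (S r + t)%nat with (S (r + t)).
  rewrite circ_iter_succ_tail, IHr by (auto; try lia; apply mod_lt, n_pos).
  replace ((i + k) mod n)%nat with ((i + 1 * k) mod n)%nat by now rewrite Nat.mul_1_l.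
  rewrite idx_add. simpl. ring.
Qed.

Lemma stable_iff_rot_invariant x t : 0 < a k -> nneg n x -> (n - 1 <= t)%nat ->
  stable_at a t x <-> rot_invariant k (circ_iter n a t x).
Proof.
  intros Hk Hx Ht. unfold stable_at. rewrite mmax_at_max. split; intros H i Hi.
  - apply Rmult_eq_reg_l with (a k); [|lra]. rewrite <- circ_iter_succ_tail by auto. now apply H.
  - rewrite circ_iter_succ_tail, H by auto. reflexivity.
Qed.

(* After multiplication by [a k ^ S t0], the left side is bounded by, and the right
   side equals, an entry of the same rotation-invariant iterate. *)
Lemma attr_cond_of_stable x t0 : 0 < a k -> nneg n x -> stable_at a t0 x -> attr_cond x.
Proof.
  intros Hk Hx H0 i j Hi.
  set (r := S t0). set (s := (r + (n - 1))%nat).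
  assert (Hinv : rot_invariant k (circ_iter n a s x)).
  { apply stable_iff_rot_invariant; auto; try (unfold s, r; lia).
    apply (stable_at_le a t0); auto. unfold s, r; lia. }
  assert (Hupper : circ_iter n a s x i = a k ^ r * circ_iter n a (n - 1) x i).
  { rewrite <- (rot_invariant_iter k _ ((n - 1) * r) i Hinv Hi).
    unfold s. rewrite circ_iter_tail_iter, idx_add by (auto; try lia; apply mod_lt, n_pos).
    replace ((n - 1) * r + r)%nat with (r * n + 0)%nat by nia. now rewrite idx_period, idx_zero. }
  assert (Hlower : a k ^ s * x ((i + j * k) mod n)%nat <= circ_iter n a s x i).
  { rewrite <- (rot_invariant_iter k _ (j + (n - 1) * s) i Hinv Hi).
    eapply Rle_trans; [|apply circ_iter_ge_pow, mod_lt; auto].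
    rewrite idx_add. replace (j + (n - 1) * s + s)%nat with (s * n + j)%nat by nia.
    now rewrite idx_period. }
  rewrite Hupper in Hlower. unfold s in Hlower. rewrite pow_add, Rmult_assoc in Hlower.
  apply Rmult_le_reg_l with (a k ^ r); [apply pow_lt, Hk|exact Hlower].
Qed.

Lemma attr_cond_rot_le x i j : 0 < a k -> nneg n x -> attr_cond x -> (i < n)%nat ->
  circ_iter n a (n - 1) x ((i + j * k) mod n)%nat
  <= circ_iter n a (n - 1) x ((i + (n - 1) * k) mod n)%nat.
Proof.
  intros Hk Hx HQ Hi. apply Rmult_le_reg_l with (a k ^ (n - 1)); [apply pow_lt, Hk|].
  rewrite <- circ_iter_tail_iter, circ_iter_add by (auto; lia).
  rewrite <- circ_iter_rotate, <- circ_iter_scal by (auto using pow_le; lra).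
  apply circ_iter_le_compat; auto.
Qed.

Lemma attr_cond_rot_invariant x : 0 < a k -> nneg n x -> attr_cond x ->
  rot_invariant k (circ_iter n a (n - 1) x).
Proof.
  intros Hk Hx HQ i Hi. set (w := circ_iter n a (n - 1) x).
  assert (Hle : forall p j, (p < n)%nat -> w ((p + j * k) mod n)%nat <= w ((p + (n - 1) * k) mod n)%nat)
    by (intros; now apply attr_cond_rot_le).
  replace ((i + k) mod n)%nat with ((i + 1 * k) mod n)%nat by now rewrite Nat.mul_1_l.
  apply Rle_antisym.
  - specialize (Hle ((i + 1 * k) mod n)%nat 0%nat (mod_lt n n_pos _)).
    rewrite !idx_add in Hle. replace (1 + (n - 1))%nat with (1 * n + 0)%nat in Hle by lia.
    rewrite idx_period, idx_zero in Hle by exact Hi. now rewrite Nat.add_0_r in Hle.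
  - specialize (Hle ((i + 2 * k) mod n)%nat (2 * n - 2)%nat (mod_lt n n_pos _)).
    rewrite !idx_add in Hle. replace (2 + (2 * n - 2))%nat with (2 * n + 0)%nat in Hle by lia.
    replace (2 + (n - 1))%nat with (1 * n + 1)%nat in Hle by lia.
    now rewrite !idx_period, idx_zero in Hle.
Qed.

Lemma stable_of_attr_cond x t : 0 < a k -> nneg n x -> attr_cond x -> (n - 1 <= t)%nat ->
  stable_at a t x.
Proof.
  intros Hk Hx HQ Ht. apply stable_iff_rot_invariant; auto.
  replace t with ((t - (n - 1)) + (n - 1))%nat by lia. rewrite circ_iter_add.
  apply rot_invariant_circ_iter, attr_cond_rot_invariant; auto.
Qed.

End MaxAt.

End Stability.

(** * Eigenvalue and attraction set of a circulant matrix *)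

Lemma seqs_length n L l : In l (seqs n L) -> length l = L.
Proof.
  revert l. induction L; simpl; intros l H.
  - now destruct H as [<-|[]].
  - apply in_flat_map in H as [s [Hs H]]. apply in_map_iff in H as [i [<- _]].
    simpl. f_equal. auto.
Qed.

Lemma seqs_complete n L l : length l = L -> (forall x, In x l -> (x < n)%nat) -> In l (seqs n L).
Proof.
  revert l. induction L; simpl; intros l Hl Hx.
  - destruct l; [now left|discriminate].
  - destruct l as [|x l]; [discriminate|]. apply in_flat_map. exists l. split.
    + apply IHL; [now injection Hl|]. intros; apply Hx; simpl; auto.
    + apply in_map_iff. exists x. split; [reflexivity|].
      apply in_seq. split; [lia|]. apply Hx; simpl; auto.
Qed.

Lemma fold_Rmax_lub (L : list R) M : 0 <= M -> (forall v, In v L -> v <= M) -> fold_right Rmax 0 L <= M.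
Proof. induction L; simpl; intros HM H; [exact HM|]. apply Rmax_lub; auto. Qed.

Lemma fold_Rmax_ge (L : list R) v : In v L -> v <= fold_right Rmax 0 L.
Proof.
  induction L; simpl; intros H; [tauto|]. destruct H as [<-|H]; [apply Rmax_l|].
  eapply Rle_trans; [apply IHL, H|apply Rmax_r].
Qed.

Lemma cw_aux_bound (A : mat) M f l : (forall i j, 0 <= A i j <= M) -> l <> [] ->
  0 <= cw_aux A f l <= M ^ length l.
Proof.
  intros HA. induction l as [|x [|y t] IH]; intros Hl; [congruence| |].
  - simpl. rewrite Rmult_1_r. apply HA.
  - change (cw_aux A f (x :: y :: t)) with (A x y * cw_aux A f (y :: t)).
    change (M ^ length (x :: y :: t)) with (M * M ^ length (y :: t)).
    destruct (HA x y), (IH ltac:(discriminate)).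
    split; [now apply Rmult_le_pos|now apply Rmult_le_compat].
Qed.

Lemma cw_aux_walk (A : mat) (w : nat -> nat) c f r L :
  (forall j, A (w j) (w (S j)) = c) ->
  cw_aux A f (map w (seq r (S L))) = c ^ L * A (w (r + L)%nat) f.
Proof.
  intros Hw. revert r. induction L; intros r.
  { simpl. rewrite Nat.add_0_r. ring. }
  change (cw_aux A f (map w (seq r (S (S L)))))
    with (A (w r) (w (S r)) * cw_aux A f (map w (seq (S r) (S L)))).
  rewrite IHL, Hw. replace (S r + L)%nat with (r + S L)%nat by lia. simpl. ring.
Qed.

Lemma Rpower_pow_inv M L : (1 <= L)%nat -> 0 < M -> Rpower (M ^ L) (/ INR L) = M.
Proof.
  intros HL HM. rewrite <- Rpower_pow, Rpower_mult, Rinv_r, Rpower_1 by (auto; apply not_0_INR; lia).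
  reflexivity.
Qed.

Lemma gmean_le w L M : (1 <= L)%nat -> 0 <= w <= M ^ L -> 0 <= M -> gmean w L <= M.
Proof.
  intros HL Hw HM. unfold gmean. destruct (Rle_dec w 0); [exact HM|].
  assert (HMp : 0 < M).
  { destruct HM as [HM|<-]; [exact HM|]. rewrite pow_i in Hw by lia. lra. }
  rewrite <- (Rpower_pow_inv M L) by auto.
  apply Rle_Rpower_l; [left; apply Rinv_0_lt_compat, lt_0_INR; lia|lra].
Qed.

Lemma gmean_pow M L : (1 <= L)%nat -> 0 <= M -> gmean (M ^ L) L = M.
Proof.
  intros HL HM. unfold gmean. destruct (Rle_dec (M ^ L) 0) as [Hle|Hgt].
  - destruct HM as [HM|<-]; [|reflexivity].
    pose proof (pow_lt M L HM). lra.
  - apply Rpower_pow_inv; [exact HL|]. destruct HM as [HM|<-]; [exact HM|].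
    rewrite pow_i in Hgt by lia. lra.
Qed.

(* The k-steps [j k mod n], j = 0..n-1, form a cycle of weight [a k ^ n]. *)
Lemma lam_circ n a : (0 < n)%nat -> nneg n a -> lam n (circ n a) = mmax n a.
Proof.
  intros Hn Ha. assert (HM : 0 <= mmax n a) by apply mmax_ge0.
  assert (HA : forall i j, 0 <= circ n a i j <= mmax n a)
    by (intros; split; [apply circ_nonneg|apply circ_le_mmax]; auto).
  unfold lam. apply Rle_antisym.
  - apply fold_Rmax_lub; [exact HM|]. intros v Hv.
    apply in_map_iff in Hv as [l [<- Hl]]. apply in_flat_map in Hl as [L [HL Hl]].
    apply in_seq in HL. apply seqs_length in Hl.
    destruct l as [|x l]; [simpl in Hl; lia|].
    apply gmean_le; [simpl in Hl |- *; lia| |exact HM].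
    apply cw_aux_bound; [exact HA|discriminate].
  - destruct (mmax_attained n a) as [k [Hk ->]]; auto.
    set (w j := ((j * k) mod n)%nat).
    assert (Hstep : forall j, circ n a (w j) (w (S j)) = a k).
    { intros j. unfold w. replace (S j * k)%nat with (j * k + k)%nat by lia.
      rewrite <- Nat.Div0.add_mod_idemp_l. apply circ_shift; auto using mod_lt. }
    apply fold_Rmax_ge, in_map_iff. exists (map w (seq 0 n)). split.
    + destruct n as [|n']; [lia|].
      change (cycle_weight (circ (S n') a) (map w (seq 0 (S n'))))
        with (cw_aux (circ (S n') a) (w 0%nat) (map w (seq 0 (S n')))).
      rewrite cw_aux_walk with (c := a k) by exact Hstep.
      replace (w 0%nat) with (w (S (0 + n'))).
      * rewrite Hstep, length_map, length_seq, Rmult_comm, tech_pow_Rmult.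
        apply gmean_pow; [lia|now apply Ha].
      * unfold w. rewrite Nat.add_0_l, Nat.mul_comm, Nat.Div0.mod_mul, Nat.mul_0_l.
        now rewrite Nat.Div0.mod_0_l.
    + apply in_flat_map. exists n. split; [apply in_seq; lia|].
      apply seqs_complete; [now rewrite length_map, length_seq|].
      intros x Hx. apply in_map_iff in Hx as [j [<- _]]. apply mod_lt, Hn.
Qed.

Section Attractor.

Variable n : nat.
Hypothesis n_pos : (0 < n)%nat.

Lemma stable_at_iff_mpow a t x : nneg n a -> nneg n x ->
  stable_at n a t x <-> forall i, (i < n)%nat ->
    mvec n (mpow n (circ n a) (S t)) x i = lam n (circ n a) * mvec n (mpow n (circ n a) t) x i.
Proof.
  intros Ha Hx. rewrite lam_circ by auto. unfold stable_at.
  split; intros H i Hi; specialize (H i Hi); now rewrite ?mvec_mpow_circ in * by auto.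
Qed.

Lemma Attr_circ_iff_stable a x N : nneg n a -> nneg n x -> (n - 1 <= N)%nat ->
  Attr n (circ n a) x <-> stable_at n a N x.
Proof.
  intros Ha Hx HN. unfold Attr. split.
  - intros [t Ht]. apply stable_at_iff_mpow in Ht; auto.
    destruct (Req_dec (mmax n a) 0) as [Z|NZ]; [now apply stable_at_zero|].
    destruct (mmax_attained n a) as [k [Hk Ek]]; auto.
    assert (Hmax : forall s, (s < n)%nat -> a s <= a k) by (intros; rewrite <- Ek; now apply mmax_ge).
    assert (Hpos : 0 < a k) by (pose proof (mmax_ge0 n a); lra).
    apply (stable_of_attr_cond n n_pos a k); auto.
    now apply (attr_cond_of_stable n n_pos a k Ha Hk Hmax x t).
  - intros H. exists N. now apply stable_at_iff_mpow.
Qed.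

Lemma Attr_circ_iff_attr_cond a k x : nneg n a -> (k < n)%nat ->
  (forall s, (s < n)%nat -> a s <= a k) -> 0 < a k -> nneg n x ->
  Attr n (circ n a) x <-> attr_cond n a k x.
Proof.
  intros Ha Hk Hmax Hpos Hx. rewrite (Attr_circ_iff_stable a x (n - 1)) by auto. split.
  - now apply (attr_cond_of_stable n n_pos a k).
  - intros H. now apply (stable_of_attr_cond n n_pos a k).
Qed.

(* The hypothesis reads [a / a k <= b / b k]: larger normalised coefficients
   satisfy the condition for more vectors. *)
Lemma attr_cond_coef_mono a b k x : nneg n a -> nneg n b -> (k < n)%nat -> 0 < a k -> 0 < b k ->
  (forall s, (s < n)%nat -> a s * b k <= b s * a k) -> nneg n x ->
  attr_cond n a k x -> attr_cond n b k x.
Proof.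
  intros Ha Hb Hk Hak Hbk Hab Hx H i j Hi.
  set (c := b k / a k). assert (Hc : 0 < c) by (apply Rdiv_lt_0_compat; auto).
  apply Rle_trans with (circ_iter n (fun s => c * a s) (n - 1) x i).
  - rewrite circ_iter_coef_scal by (auto; lra).
    replace (b k) with (c * a k) by (unfold c; field; lra). rewrite Rpow_mult_distr, Rmult_assoc.
    apply Rmult_le_compat_l; [apply pow_le; lra|]. now apply H.
  - apply circ_iter_coef_le_compat; auto.
    + intros s Hs. apply Rmult_le_pos; [lra|now apply Ha].
    + intros s Hs. unfold c. apply Rmult_le_reg_r with (a k); [exact Hak|].
      replace (b k / a k * a s * a k) with (a s * b k) by (field; lra). now apply Hab.
Qed.

Lemma Attr_circ_iff_power_eq a x N : nneg n a -> nneg n x -> (n - 1 <= N)%nat ->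
  Attr n (circ n a) x <-> forall i, (i < n)%nat ->
    lam n (circ n a) * mvec n (mpow n (circ n a) N) x i = mvec n (mpow n (circ n a) (N + 1)) x i.
Proof.
  intros Ha Hx HN. rewrite (Attr_circ_iff_stable a x N), stable_at_iff_mpow, Nat.add_1_r by auto.
  split; intros H i Hi; symmetry; now apply H.
Qed.

Lemma mmax_eq0_of_circ_zero a : nneg n a -> ~ mnonzero n (circ n a) -> mmax n a = 0.
Proof.
  intros Ha Hz. apply Rle_antisym; [|apply mmax_ge0]. apply mmax_lub; [lra|]. intros t Ht.
  destruct (Req_dec (a t) 0) as [E|NE]; [lra|]. exfalso. apply Hz. exists 0%nat, t.
  rewrite <- (circ_shift n n_pos a 0 t), Nat.add_0_l, Nat.mod_small in NE by auto. auto.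
Qed.

(* [Ak n al au k] unfolds to [circ n (vertex al au k)]. *)
Definition vertex (al au : nat -> R) (k t : nat) : R := if Nat.eqb t k then au t else al t.

(* Raising the maximal coefficient to its upper end and lowering the others
   only shrinks the attraction set. *)
Lemma Attr_of_vertex_Attr al au a k x : nneg n al -> nneg n x ->
  (forall t, (t < n)%nat -> al t <= a t <= au t) -> (k < n)%nat ->
  (forall s, (s < n)%nat -> a s <= a k) ->
  Attr n (circ n (vertex al au k)) x -> Attr n (circ n a) x.
Proof.
  intros Hal Hx Ha Hk Hmax Hvert.
  assert (Han : nneg n a) by (intros t Ht; specialize (Ha t Ht); specialize (Hal t Ht); lra).
  assert (Ek : mmax n a = a k) by (apply mmax_at_max; auto).
  destruct (Req_dec (a k) 0) as [Z|NZ].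
  { apply (Attr_circ_iff_stable a x (n - 1)); auto.
    apply (stable_at_zero n n_pos a); [exact Han|congruence]. }
  assert (Hpos : 0 < a k) by (pose proof (Han k Hk); lra).
  set (b := vertex al au k).
  assert (Hbk : b k = au k) by (unfold b, vertex; now rewrite Nat.eqb_refl).
  assert (Hbs : forall s, (s < n)%nat -> s <> k -> b s = al s)
    by (intros s Hs Hne; unfold b, vertex; now rewrite (proj2 (Nat.eqb_neq s k) Hne)).
  assert (Hak : a k <= au k) by apply Ha, Hk.
  assert (Hbn : nneg n b).
  { intros s Hs. destruct (Nat.eq_dec s k) as [->|Hne]; [rewrite Hbk; lra|rewrite Hbs; auto]. }
  assert (Hbmax : forall s, (s < n)%nat -> b s <= b k).
  { intros s Hs. rewrite Hbk. destruct (Nat.eq_dec s k) as [->|Hne]; [lra|].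
    rewrite Hbs by auto. specialize (Ha s Hs). specialize (Hmax s Hs). lra. }
  apply (Attr_circ_iff_attr_cond a k x); auto.
  apply (attr_cond_coef_mono b a k x); auto; [lra| |].
  - intros s Hs. rewrite Hbk. destruct (Nat.eq_dec s k) as [->|Hne]; [rewrite Hbk; lra|].
    rewrite Hbs by auto. specialize (Ha s Hs). specialize (Hal s Hs).
    apply Rmult_le_compat; lra.
  - apply (Attr_circ_iff_attr_cond b k x Hbn Hk Hbmax); [lra|exact Hx|exact Hvert].
Qed.

End Attractor.

(** * Continuity *)

Definition close (e u v : R) := u <= v + e /\ v <= u + e.

Lemma close_sym e u v : close e u v -> close e v u.
Proof. unfold close; lra. Qed.

Lemma close_trans e1 e2 u v w : close e1 u v -> close e2 v w -> close (e1 + e2) u w.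
Proof. unfold close; lra. Qed.

Lemma close_weaken e e' u v : e <= e' -> close e u v -> close e' u v.
Proof. unfold close; lra. Qed.

Lemma close_mult d1 d2 u u' v v' V : 0 <= v <= V -> 0 <= u' ->
  close d1 u u' -> close d2 v v' -> close (d1 * V + u' * d2) (u * v) (u' * v').
Proof.
  unfold close. intros [Hv HV] Hu' [H1 H2] [H3 H4].
  assert (u * v <= (u' + d1) * v) by (apply Rmult_le_compat_r; lra).
  assert (u' * v <= (u + d1) * v) by (apply Rmult_le_compat_r; lra).
  assert (u' * v <= u' * (v' + d2)) by (apply Rmult_le_compat_l; lra).
  assert (u' * v' <= u' * (v + d2)) by (apply Rmult_le_compat_l; lra).
  assert (d1 * v <= d1 * V) by (apply Rmult_le_compat_l; lra).
  split; lra.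
Qed.

Lemma close_scal c e u v : 0 <= c -> close e u v -> close (c * e) (c * u) (c * v).
Proof.
  unfold close. intros Hc [H1 H2].
  split; rewrite <- Rmult_plus_distr_l; apply Rmult_le_compat_l; lra.
Qed.

Lemma close_Rmax e u u' v v' : close e u v -> close e u' v' -> close e (Rmax u u') (Rmax v v').
Proof. unfold close, Rmax. intros. repeat destruct Rle_dec; lra. Qed.

Lemma le_of_forall_eps u v : (forall e, 0 < e -> u <= v + e) -> u <= v.
Proof.
  intros H. destruct (Rle_dec u v) as [Hle|Hgt]; [exact Hle|].
  specialize (H ((u - v) / 2) ltac:(lra)). lra.
Qed.

Lemma close_of_forall_eps d u v : (forall e, 0 < e -> close (d + e) u v) -> close d u v.
Proof.
  intros H. split; apply le_of_forall_eps; intros e He; destruct (H e He); lra.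
Qed.

Section Continuity.

Variable n : nat.
Hypothesis n_pos : (0 < n)%nat.

Lemma mmax_perturb a b d : 0 <= d -> (forall s, (s < n)%nat -> a s <= b s + d) ->
  mmax n a <= mmax n b + d.
Proof.
  intros Hd H. apply mmax_lub; [pose proof (mmax_ge0 n b); lra|].
  intros s Hs. specialize (H s Hs). pose proof (mmax_ge n b s Hs). lra.
Qed.

Lemma circ_mv_le_bound a y Y i : nneg n a -> (forall j, (j < n)%nat -> 0 <= y j <= Y) ->
  circ_mv n a y i <= mmax n a * Y.
Proof.
  intros Ha Hy. apply mmax_lub.
  - apply Rmult_le_pos; [apply mmax_ge0|]. destruct (Hy 0%nat n_pos); lra.
  - intros j Hj. destruct (Hy j Hj).
    apply Rmult_le_compat; auto using circ_nonneg, circ_le_mmax.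
Qed.

Lemma circ_iter_le_bound a t y Y i : nneg n a -> (forall j, (j < n)%nat -> 0 <= y j <= Y) ->
  (i < n)%nat -> 0 <= circ_iter n a t y i <= mmax n a ^ t * Y.
Proof.
  intros Ha Hy. revert i. induction t; simpl; intros i Hi; [rewrite Rmult_1_l; auto|].
  split; [apply circ_mv_ge0|]. rewrite Rmult_assoc. apply circ_mv_le_bound; auto.
Qed.

Lemma circ_mv_vec_perturb b y z e i : nneg n b -> 0 <= e ->
  (forall j, (j < n)%nat -> y j <= z j + e) -> circ_mv n b y i <= circ_mv n b z i + mmax n b * e.
Proof.
  intros Hb He H. apply mmax_lub.
  - pose proof (circ_mv_ge0 n b z i). pose proof (Rmult_le_pos _ _ (mmax_ge0 n b) He). lra.
  - intros j Hj. pose proof (circ_nonneg n n_pos b i j Hb). pose proof (circ_le_mmax n n_pos b i j).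
    pose proof (mmax_ge n (fun j => circ n b i j * z j) j Hj). simpl in *.
    assert (circ n b i j * y j <= circ n b i j * (z j + e)) by (apply Rmult_le_compat_l; auto).
    assert (circ n b i j * e <= mmax n b * e) by (apply Rmult_le_compat_r; auto).
    unfold circ_mv, mvec. lra.
Qed.

Lemma circ_mv_coef_perturb a b y d Y i : 0 <= d -> (forall s, (s < n)%nat -> a s <= b s + d) ->
  (forall j, (j < n)%nat -> 0 <= y j <= Y) -> circ_mv n a y i <= circ_mv n b y i + d * Y.
Proof.
  intros Hd Hab Hy. apply mmax_lub.
  - pose proof (circ_mv_ge0 n b y i). destruct (Hy 0%nat n_pos).
    pose proof (Rmult_le_pos d Y Hd ltac:(lra)). lra.
  - intros j Hj. destruct (Hy j Hj).
    assert (circ n a i j <= circ n b i j + d) by (unfold circ; apply Hab, mod_lt, n_pos).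
    pose proof (mmax_ge n (fun j => circ n b i j * y j) j Hj). simpl in *.
    assert (circ n a i j * y j <= (circ n b i j + d) * y j) by (apply Rmult_le_compat_r; auto).
    assert (d * y j <= d * Y) by (apply Rmult_le_compat_l; auto).
    unfold circ_mv, mvec. lra.
Qed.

Lemma circ_iter_close b t y z e i : nneg n b -> 0 <= e ->
  (forall j, (j < n)%nat -> close e (y j) (z j)) -> (i < n)%nat ->
  close (mmax n b ^ t * e) (circ_iter n b t y i) (circ_iter n b t z i).
Proof.
  intros Hb He H. revert i. induction t; simpl; intros i Hi; [rewrite Rmult_1_l; auto|].
  assert (Het : 0 <= mmax n b ^ t * e) by (apply Rmult_le_pos; auto using pow_le, mmax_ge0).
  rewrite Rmult_assoc. split; apply circ_mv_vec_perturb; auto; intros j Hj; apply IHt, Hj.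
Qed.

Lemma circ_iter_coef_close b B t : nneg n b -> 0 <= B -> exists C, 0 <= C /\
  forall a d x i, nneg n a -> 0 <= d <= 1 -> (forall s, (s < n)%nat -> close d (a s) (b s)) ->
    (forall j, (j < n)%nat -> 0 <= x j <= B) -> (i < n)%nat ->
    close (C * d) (circ_iter n a t x i) (circ_iter n b t x i).
Proof.
  intros Hb HB. set (K := mmax n b + 1).
  assert (HK : 0 <= K) by (unfold K; pose proof (mmax_ge0 n b); lra).
  induction t as [|t [C [HC IH]]].
  { exists 0. split; [lra|]. intros. simpl. unfold close. lra. }
  exists (K * C + K ^ t * B).
  split; [apply Rplus_le_le_0_compat; apply Rmult_le_pos; auto using pow_le|].
  intros a d x i Ha Hd Hab Hx Hi. simpl.
  assert (HCd : 0 <= C * d) by (apply Rmult_le_pos; lra).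
  assert (Hhalf : forall a1 b1, nneg n a1 -> nneg n b1 -> mmax n a1 <= K -> mmax n b1 <= K ->
    (forall s, (s < n)%nat -> a1 s <= b1 s + d) ->
    (forall j, (j < n)%nat -> circ_iter n a1 t x j <= circ_iter n b1 t x j + C * d) ->
    circ_mv n a1 (circ_iter n a1 t x) i
    <= circ_mv n b1 (circ_iter n b1 t x) i + (K * C + K ^ t * B) * d).
  { intros a1 b1 Ha1 Hb1 HaK HbK Hab1 Hit.
    assert (Hbound : forall j, (j < n)%nat -> 0 <= circ_iter n a1 t x j <= K ^ t * B).
    { intros j Hj. destruct (circ_iter_le_bound a1 t x B j Ha1 Hx Hj). split; [lra|].
      eapply Rle_trans; [eassumption|]. apply Rmult_le_compat_r; [exact HB|].
      apply pow_incr. split; [apply mmax_ge0|exact HaK]. }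
    pose proof (circ_mv_coef_perturb a1 b1 _ d _ i ltac:(lra) Hab1 Hbound).
    pose proof (circ_mv_vec_perturb b1 _ _ _ i Hb1 HCd Hit).
    pose proof (Rmult_le_compat_r _ _ _ HCd HbK). lra. }
  assert (HaK : mmax n a <= K).
  { unfold K. eapply Rle_trans; [apply (mmax_perturb a b d); [lra|intros; apply Hab; auto]|lra]. }
  assert (HbK : mmax n b <= K) by (unfold K; lra).
  split; apply Hhalf; auto; intros j Hj; first [apply (Hab j Hj)|apply (IH a d x j); auto].
Qed.

End Continuity.

(** * Greatest elements of max-closed sets in a box *)

Section BoxLattice.

Variable n : nat.
Variables xl xu : vec.

Definition vle (x y : vec) := forall i, (i < n)%nat -> x i <= y i.

Definition max_closed (P : vec -> Prop) :=
  forall x y, P x -> P y -> P (fun i => Rmax (x i) (y i)).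

Definition limit_closed (P : vec -> Prop) :=
  forall x, (forall e, 0 < e -> exists y, P y /\ forall i, (i < n)%nat -> close e (y i) (x i)) -> P x.

Lemma sup_approx (E : R -> Prop) s e : is_lub E s -> 0 < e -> exists v, E v /\ s - e < v.
Proof.
  intros [Hub Hleast] He. apply NNPP. intros Hno.
  assert (is_upper_bound E (s - e)).
  { intros v Hv. apply Rnot_lt_le. intros Hlt. apply Hno. now exists v. }
  specialize (Hleast _ H). lra.
Qed.

(* The coordinatewise supremum is approached from inside P by the maximum of
   finitely many elements, one per coordinate. *)
Lemma max_closed_greatest (P : vec -> Prop) : (forall x, P x -> vle x xu) -> (exists x, P x) ->
  max_closed P -> limit_closed P -> exists g, P g /\ forall x, P x -> vle x g.
Proof.
  intros Hbnd [x0 Hx0] Hmax Hlim.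
  set (E i v := exists x, P x /\ v = Rmin (x i) (xu i)).
  assert (HE : forall i, bound (E i))
    by (intros i; exists (xu i); intros v [x [_ ->]]; apply Rmin_r).
  assert (HEx : forall i, exists v, E i v) by (intros i; exists (Rmin (x0 i) (xu i)), x0; auto).
  set (g i := proj1_sig (completeness (E i) (HE i) (HEx i))).
  assert (Hg : forall i, is_lub (E i) (g i)) by (intros i; apply (proj2_sig (completeness _ _ _))).
  assert (Hup : forall x, P x -> vle x g).
  { intros x Hx i Hi. apply (proj1 (Hg i)). exists x. split; [exact Hx|].
    symmetry. apply Rmin_left, Hbnd; auto. }
  exists g. split; [|exact Hup]. apply Hlim. intros e He.
  assert (Hcover : forall p, (p <= n)%nat -> exists y, P y /\ forall i, (i < p)%nat -> g i - e <= y i).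
  { induction p as [|p IH]; intros Hp.
    - exists x0. split; [exact Hx0|]. intros; lia.
    - destruct IH as [y [Hy Hyp]]; [lia|].
      destruct (sup_approx (E p) (g p) e (Hg p) He) as [v [[z [Hz ->]] Hv]].
      exists (fun i => Rmax (y i) (z i)). split; [now apply Hmax|].
      intros i Hi. destruct (Nat.eq_dec i p) as [->|Hne].
      + pose proof (Rmax_r (y p) (z p)). pose proof (Rmin_l (z p) (xu p)). lra.
      + pose proof (Rmax_l (y i) (z i)). specialize (Hyp i ltac:(lia)). lra. }
  destruct (Hcover n (le_n n)) as [y [Hy Hyg]].
  exists y. split; [exact Hy|]. intros i Hi. specialize (Hup y Hy i Hi). specialize (Hyg i Hi).
  unfold close. lra.
Qed.

Lemma decreasing_family_inf (top : R -> vec) :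
  (forall eta eta', 0 < eta <= eta' -> vle (top eta) (top eta')) ->
  (forall eta, 0 < eta -> vle xl (top eta)) ->
  exists g, (forall eta, 0 < eta -> vle g (top eta)) /\
    forall eta e, 0 < eta -> 0 < e ->
      exists eta', 0 < eta' <= eta /\ forall i, (i < n)%nat -> top eta' i <= g i + e.
Proof.
  intros Hmono Hxl.
  set (F i v := exists eta, 0 < eta /\ v = - Rmax (top eta i) (xl i)).
  assert (HF : forall i, bound (F i))
    by (intros i; exists (- xl i); intros v [eta [_ ->]]; apply Ropp_le_contravar, Rmax_r).
  assert (HFx : forall i, exists v, F i v)
    by (intros i; exists (- Rmax (top 1 i) (xl i)), 1; split; [lra|reflexivity]).
  set (g i := - proj1_sig (completeness (F i) (HF i) (HFx i))).
  assert (Hg : forall i, is_lub (F i) (- g i)).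
  { intros i. unfold g. rewrite Ropp_involutive. apply (proj2_sig (completeness _ _ _)). }
  assert (Htop_xl : forall eta i, 0 < eta -> (i < n)%nat -> Rmax (top eta i) (xl i) = top eta i)
    by (intros eta i Heta Hi; apply Rmax_left, Hxl; auto).
  exists g. split.
  { intros eta Heta i Hi. rewrite <- Htop_xl by auto.
    enough (- Rmax (top eta i) (xl i) <= - g i) by lra. apply (proj1 (Hg i)). now exists eta. }
  intros eta e Heta He.
  assert (Happrox : forall i, (i < n)%nat -> exists eta', 0 < eta' /\ top eta' i <= g i + e).
  { intros i Hi. destruct (sup_approx (F i) (- g i) e (Hg i) He) as [v [[eta' [Heta' ->]] Hv]].
    exists eta'. split; [exact Heta'|]. rewrite Htop_xl in Hv by auto. lra. }
  assert (Hsmall : forall p, (p <= n)%nat -> exists eta', 0 < eta' <= eta /\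
            forall i, (i < p)%nat -> top eta' i <= g i + e).
  { induction p as [|p IH]; intros Hp.
    { exists eta. split; [lra|]. intros; lia. }
    destruct IH as [eta1 [H1 H1i]]; [lia|].
    destruct (Happrox p ltac:(lia)) as [eta2 [H2 H2p]].
    set (eta' := Rmin eta1 eta2).
    assert (0 < eta') by (apply Rmin_pos; lra).
    assert (eta' <= eta1) by apply Rmin_l. assert (eta' <= eta2) by apply Rmin_r.
    exists eta'. split; [lra|]. intros i Hi. destruct (Nat.eq_dec i p) as [->|Hip].
    - eapply Rle_trans; [apply (Hmono eta' eta2); [lra|lia]|exact H2p].
    - eapply Rle_trans; [apply (Hmono eta' eta1); [lra|lia]|apply H1i; lia]. }
  apply Hsmall, le_n.
Qed.

(* Greatest elements exist by [max_closed_greatest]; they decrease as the parameter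
   does, and their infimum belongs to every member by closedness. *)
Lemma nested_family_meet (P : R -> vec -> Prop) :
  (forall eta, 0 < eta -> exists x, P eta x) ->
  (forall eta, 0 < eta -> max_closed (P eta)) ->
  (forall eta, 0 < eta -> limit_closed (P eta)) ->
  (forall eta x, 0 < eta -> P eta x -> vle xl x /\ vle x xu) ->
  (forall eta eta' x, 0 < eta <= eta' -> P eta x -> P eta' x) ->
  exists g, forall eta, 0 < eta -> P eta g.
Proof.
  intros Hne Hmax Hlim Hbox Hmono.
  destruct (functional_choice (fun eta g => 0 < eta -> P eta g /\ forall x, P eta x -> vle x g))
    as [top Htop].
  { intros eta. destruct (Rlt_dec 0 eta) as [Heta|Heta]; [|exists xl; intros; lra].
    destruct (max_closed_greatest (P eta)) as [g Hg]; auto.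
    - intros x Hx. now apply (Hbox eta).
    - now exists g. }
  destruct (decreasing_family_inf top) as [g [Hg_le Hg_approx]].
  - intros eta eta' Hee. apply (Htop eta'); [lra|]. apply (Hmono eta); [lra|]. apply Htop; lra.
  - intros eta Heta. apply (Hbox eta); [exact Heta|]. now apply Htop.
  - exists g. intros eta Heta. apply (Hlim eta Heta). intros e He.
    destruct (Hg_approx eta e Heta He) as [eta' [Heta' Hclose]].
    exists (top eta'). split; [apply (Hmono eta'); [lra|apply Htop; lra]|].
    intros i Hi. pose proof (Hg_le eta' ltac:(lra) i Hi). pose proof (Hclose i Hi).
    unfold close; lra.
Qed.

End BoxLattice.

(** * Tolerance robustness *)

Section Limit.

Variable n : nat.
Hypothesis n_pos : (0 < n)%nat.
Variables xl xu : vec.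
Hypothesis box_nonneg : forall i, (i < n)%nat -> 0 <= xl i <= xu i.
Variable b : nat -> R.
Hypothesis b_nonneg : nneg n b.
Variable N : nat.

Definition approx_stable (eta : R) (x : vec) := inX n xl xu x /\
  forall i, (i < n)%nat -> close eta (circ_iter n b (S N) x i) (mmax n b * circ_iter n b N x i).

Lemma inX_bounded x j : inX n xl xu x -> (j < n)%nat -> 0 <= x j <= mmax n xu.
Proof.
  intros Hx Hj. destruct (Hx j Hj), (box_nonneg j Hj). pose proof (mmax_ge n xu j Hj). lra.
Qed.

Lemma inX_nonneg x : inX n xl xu x -> nneg n x.
Proof. intros Hx j Hj. now apply (inX_bounded x j). Qed.

Lemma approx_stable_mono eta eta' x : eta <= eta' -> approx_stable eta x -> approx_stable eta' x.
Proof.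
  intros H [Hx Hc]. split; [exact Hx|]. intros i Hi. apply (close_weaken eta); auto.
Qed.

Lemma approx_stable_max_closed eta : max_closed (approx_stable eta).
Proof.
  intros x y [Hx Hxc] [Hy Hyc]. split.
  - intros i Hi. destruct (Hx i Hi), (Hy i Hi).
    split; [eapply Rle_trans; [|apply Rmax_l]; lra|apply Rmax_lub; lra].
  - intros i Hi. rewrite !circ_iter_Rmax, <- RmaxRmult by (auto using mmax_ge0).
    apply close_Rmax; auto.
Qed.

Lemma approx_stable_limit_closed eta : 0 <= eta -> limit_closed n (approx_stable eta).
Proof.
  intros Heta g Hg.
  assert (HX : inX n xl xu g).
  { intros i Hi. split; apply le_of_forall_eps; intros e He;
      destruct (Hg e He) as [y [[Hy _] Hyg]]; destruct (Hy i Hi), (Hyg i Hi); lra. }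
  split; [exact HX|]. intros i Hi. apply close_of_forall_eps. intros e He.
  set (Mb := mmax n b). assert (HMb : 0 <= Mb) by apply mmax_ge0.
  set (c := 2 * Mb ^ S N + 1).
  assert (Hc : 0 < c) by (unfold c; pose proof (pow_le Mb (S N) HMb); lra).
  assert (He' : 0 < e / c) by (apply Rdiv_lt_0_compat; auto).
  destruct (Hg (e / c) He') as [y [[Hy Hyst] Hyg]].
  assert (Hnear : forall t, close (Mb ^ t * (e / c)) (circ_iter n b t y i) (circ_iter n b t g i)).
  { intros t. apply circ_iter_close; auto; lra. }
  pose proof (close_trans _ _ _ _ _ (close_sym _ _ _ (Hnear (S N))) (Hyst i Hi)) as H1.
  pose proof (close_trans _ _ _ _ _ H1 (close_scal Mb _ _ _ HMb (Hnear N))) as H2.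
  eapply close_weaken; [|exact H2].
  replace (Mb * (Mb ^ N * (e / c))) with (Mb ^ S N * (e / c)) by (simpl; ring).
  enough (2 * Mb ^ S N * (e / c) <= e) by lra.
  apply Rle_trans with (c * (e / c)); [apply Rmult_le_compat_r; [lra|unfold c; lra]|].
  right. field. lra.
Qed.

Hypothesis approx : forall d, 0 < d -> exists a x, nneg n a /\
  (forall s, (s < n)%nat -> close d (a s) (b s)) /\ inX n xl xu x /\ stable_at n a N x.

Lemma approx_stable_exists eta : 0 < eta -> exists x, approx_stable eta x.
Proof.
  intros Heta. set (B := mmax n xu). assert (HB : 0 <= B) by apply mmax_ge0.
  destruct (circ_iter_coef_close n n_pos b B (S N) b_nonneg HB) as [C1 [HC1 H1]].
  destruct (circ_iter_coef_close n n_pos b B N b_nonneg HB) as [C2 [HC2 H2]].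
  set (Mb := mmax n b). assert (HMb : 0 <= Mb) by apply mmax_ge0.
  set (K := Mb + 1). set (D := C1 + K ^ N * B + Mb * C2 + 1).
  assert (HKN : 0 <= K ^ N * B) by (apply Rmult_le_pos; [apply pow_le; unfold K; lra|exact HB]).
  assert (HD : 0 < D) by (unfold D; pose proof (Rmult_le_pos Mb C2 HMb HC2); lra).
  set (d := Rmin 1 (eta / D)).
  assert (Hd : 0 < d) by (apply Rmin_pos; [lra|apply Rdiv_lt_0_compat; auto]).
  assert (Hd1 : d <= 1) by apply Rmin_l.
  assert (HdD : d * D <= eta).
  { apply Rle_trans with (eta / D * D); [apply Rmult_le_compat_r; [lra|apply Rmin_r]|].
    right. field. lra. }
  destruct (approx d Hd) as [a [x [Ha [Hab [Hx Hstab]]]]].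
  exists x. split; [exact Hx|]. intros i Hi.
  assert (Hxb : forall j, (j < n)%nat -> 0 <= x j <= B) by (intros; now apply inX_bounded).
  assert (HMa : close d (mmax n a) Mb)
    by (split; apply mmax_perturb; auto; try lra; intros s Hs; apply (Hab s Hs)).
  assert (Hbound : 0 <= circ_iter n a N x i <= K ^ N * B).
  { destruct (circ_iter_le_bound n n_pos a N x B i Ha Hxb Hi). split; [lra|].
    eapply Rle_trans; [eassumption|]. apply Rmult_le_compat_r; [exact HB|].
    apply pow_incr. split; [apply mmax_ge0|destruct HMa; unfold K; lra]. }
  pose proof (close_sym _ _ _ (H1 a d x i Ha ltac:(lra) Hab Hxb Hi)) as E1.
  rewrite (Hstab i Hi) in E1.
  pose proof (close_mult _ _ _ _ _ _ _ Hbound HMb HMa (H2 a d x i Ha ltac:(lra) Hab Hxb Hi)) as E2.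
  apply (close_weaken (C1 * d + (d * (K ^ N * B) + Mb * (C2 * d))));
    [|exact (close_trans _ _ _ _ _ E1 E2)].
  unfold D in HdD. nra.
Qed.

Lemma stable_at_of_approx : exists x, inX n xl xu x /\ stable_at n b N x.
Proof.
  destruct (nested_family_meet n xl xu approx_stable) as [g Hg].
  - exact approx_stable_exists.
  - intros eta _. apply approx_stable_max_closed.
  - intros eta Heta. apply approx_stable_limit_closed. lra.
  - intros eta x _ [Hx _]. split; intros i Hi; apply (Hx i Hi).
  - intros eta eta' x Hee. apply approx_stable_mono. lra.
  - exists g. split; [apply (Hg 1); lra|]. intros i Hi.
    assert (H0 : close 0 (circ_iter n b (S N) g i) (mmax n b * circ_iter n b N g i)).
    { apply close_of_forall_eps. intros e He. rewrite Rplus_0_l. now apply (Hg e He). }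
    destruct H0; lra.
Qed.

End Limit.

Section Robustness.

Variable n : nat.
Hypothesis n_pos : (0 < n)%nat.
Variables (xl xu : vec) (al au : nat -> R) (lc uc : nat -> bool).
Hypothesis hX : forall i, (i < n)%nat -> 0 <= xl i <= xu i.
Hypothesis hI : forall t, (t < n)%nat ->
  0 <= al t /\ (if andb (lc t) (uc t) then al t <= au t else al t < au t).

Lemma inI_bounds t a : (t < n)%nat -> inI al au lc uc t a -> 0 <= al t <= a /\ a <= au t.
Proof.
  intros Ht [Hl Hu]. destruct (hI t Ht) as [H0 _].
  destruct (lc t), (uc t); lra.
Qed.

Definition lower_inner (d : R) (t : nat) : R :=
  if lc t then al t else al t + Rmin d ((au t - al t) / 2).
Definition upper_inner (d : R) (t : nat) : R :=
  if uc t then au t else au t - Rmin d ((au t - al t) / 2).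

Lemma lower_inner_spec d t : 0 < d -> (t < n)%nat ->
  inI al au lc uc t (lower_inner d t) /\ close d (lower_inner d t) (al t).
Proof.
  intros Hd Ht. destruct (hI t Ht) as [H0 H1]. unfold inI, lower_inner, close.
  pose proof (Rmin_l d ((au t - al t) / 2)). pose proof (Rmin_r d ((au t - al t) / 2)).
  destruct (lc t), (uc t); simpl in H1; repeat split; try lra;
    assert (0 < Rmin d ((au t - al t) / 2)) by (apply Rmin_pos; lra); lra.
Qed.

Lemma upper_inner_spec d t : 0 < d -> (t < n)%nat ->
  inI al au lc uc t (upper_inner d t) /\ close d (upper_inner d t) (au t).
Proof.
  intros Hd Ht. destruct (hI t Ht) as [H0 H1]. unfold inI, upper_inner, close.
  pose proof (Rmin_l d ((au t - al t) / 2)). pose proof (Rmin_r d ((au t - al t) / 2)).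
  destruct (lc t), (uc t); simpl in H1; repeat split; try lra;
    assert (0 < Rmin d ((au t - al t) / 2)) by (apply Rmin_pos; lra); lra.
Qed.

Lemma vertex_nneg k : nneg n (vertex al au k).
Proof.
  intros t Ht. unfold vertex. destruct (hI t Ht) as [H0 H1].
  destruct (Nat.eqb t k); [destruct (andb (lc t) (uc t))|]; lra.
Qed.

Lemma robust_of_vertex_Attr :
  (forall k, (k < n)%nat -> exists x, inX n xl xu x /\ Attr n (Ak n al au k) x) ->
  tol_robust n al au lc uc xl xu.
Proof.
  intros Hvert a Ha.
  assert (Hab : forall t, (t < n)%nat -> 0 <= al t <= a t /\ a t <= au t)
    by (intros t Ht; now apply inI_bounds, Ha).
  assert (Han : nneg n a) by (intros t Ht; destruct (Hab t Ht); lra).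
  destruct (mmax_attained n a) as [k [Hk Ek]]; auto.
  destruct (Hvert k Hk) as [x [Hx HA]]. exists x. split; [exact Hx|].
  apply (Attr_of_vertex_Attr n n_pos al au a k x); auto.
  - intros t Ht. now apply Hab.
  - now apply (inX_nonneg n xl xu hX).
  - intros t Ht. destruct (Hab t Ht). lra.
  - intros s Hs. rewrite <- Ek. now apply mmax_ge.
Qed.

(* Matrices of the family approach the vertex [A^(k)], whose attraction set therefore
   meets the box by the limit argument. *)
Lemma vertex_Attr_of_robust : tol_robust n al au lc uc xl xu ->
  forall k, (k < n)%nat -> exists x, inX n xl xu x /\ Attr n (Ak n al au k) x.
Proof.
  intros Hrob k Hk.
  destruct (stable_at_of_approx n n_pos xl xu hX (vertex al au k) (vertex_nneg k) (n - 1))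
    as [x [Hx Hst]].
  - intros d Hd.
    set (a t := if Nat.eqb t k then upper_inner d t else lower_inner d t).
    assert (Ha : forall t, (t < n)%nat -> inI al au lc uc t (a t) /\ close d (a t) (vertex al au k t)).
    { intros t Ht. unfold a, vertex. destruct (Nat.eqb t k);
        [apply upper_inner_spec|apply lower_inner_spec]; auto. }
    destruct (Hrob a) as [x [Hx HA]]; [intros t Ht; apply Ha, Ht|].
    assert (Han : nneg n a)
      by (intros t Ht; destruct (inI_bounds t (a t) Ht (proj1 (Ha t Ht))); lra).
    exists a, x. split; [exact Han|]. split; [intros s Hs; apply Ha, Hs|]. split; [exact Hx|].
    now apply (Attr_circ_iff_stable n n_pos a x (n - 1) Han (inX_nonneg n xl xu hX x Hx)).
  - exists x. split; [exact Hx|].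
    now apply (Attr_circ_iff_stable n n_pos _ x (n - 1) (vertex_nneg k) (inX_nonneg n xl xu hX x Hx)).
Qed.

Lemma vertex_Attr_iff_power_eq :
  (forall k, (k < n)%nat -> exists x, inX n xl xu x /\ Attr n (Ak n al au k) x) <->
  (forall k, (k < n)%nat -> mnonzero n (Ak n al au k) ->
     exists y, inX n xl xu y /\
       forall i, (i < n)%nat ->
         lam n (Ak n al au k) * mvec n (mpow n (Ak n al au k) (n ^ 2)) y i
         = mvec n (mpow n (Ak n al au k) (n ^ 2 + 1)) y i).
Proof.
  assert (HN : (n - 1 <= n ^ 2)%nat) by (simpl; nia).
  split.
  - intros H k Hk _. destruct (H k Hk) as [x [Hx HA]]. exists x. split; [exact Hx|].
    now apply (Attr_circ_iff_power_eq n n_pos _ x (n ^ 2) (vertex_nneg k) (inX_nonneg n xl xu hX x Hx)).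
  - intros H k Hk. destruct (classic (mnonzero n (Ak n al au k))) as [NZ|Z].
    + destruct (H k Hk NZ) as [y [Hy E]]. exists y. split; [exact Hy|].
      now apply (Attr_circ_iff_power_eq n n_pos _ y (n ^ 2) (vertex_nneg k) (inX_nonneg n xl xu hX y Hy)).
    + assert (Hxl : inX n xl xu xl) by (intros i Hi; destruct (hX i Hi); lra).
      exists xl. split; [exact Hxl|].
      apply (Attr_circ_iff_stable n n_pos _ xl (n - 1) (vertex_nneg k) (inX_nonneg n xl xu hX xl Hxl));
        [lia|]. apply stable_at_zero, mmax_eq0_of_circ_zero; auto using vertex_nneg.
Qed.

End Robustness.

Theorem theorem4 (n : nat) (xl xu : vec) (al au : nat -> R) (lc uc : nat -> bool)
  (hX : forall i, (i < n)%nat -> 0 <= xl i <= xu i)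
  (hI : forall t, (t < n)%nat ->
          0 <= al t /\ (if andb (lc t) (uc t) then al t <= au t else al t < au t)) :
  (tol_robust n al au lc uc xl xu <->
     (forall k, (k < n)%nat -> exists x, inX n xl xu x /\ Attr n (Ak n al au k) x))
  /\
  (tol_robust n al au lc uc xl xu <->
     (forall k, (k < n)%nat -> mnonzero n (Ak n al au k) ->
        exists y, inX n xl xu y /\
          forall i, (i < n)%nat ->
            lam n (Ak n al au k) * mvec n (mpow n (Ak n al au k) (n ^ 2)) y i
            = mvec n (mpow n (Ak n al au k) (n ^ 2 + 1)) y i)).
Proof.
  destruct (Nat.eq_dec n 0) as [->|Hn0].
  { assert (R : tol_robust 0 al au lc uc xl xu).
    { intros a _. exists xl. split; [intros i Hi; lia|]. exists 0%nat. intros i Hi; lia. }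
    split; split; intros; auto; lia. }
  assert (Hn : (0 < n)%nat) by lia.
  pose proof (vertex_Attr_of_robust n Hn xl xu al au lc uc hX hI) as Hnec.
  pose proof (robust_of_vertex_Attr n Hn xl xu al au lc uc hX hI) as Hsuf.
  pose proof (vertex_Attr_iff_power_eq n Hn xl xu al au lc uc hX hI) as Hpow.
  split; [split; assumption|]. rewrite <- Hpow. split; assumption.
Qed.
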